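(* For all nonnegative integers $k$, $n$, and $r$, \[ \sum_{i=0}^k\binom{(r+1)i+n}{i} \;=\; \sum_{\alpha \in \mathcal{C}(k, r)} (-1)^{|\alpha|-\ell(\alpha)} \Biggl(\prod_{j=1}^{\ell(\alpha)}\binom{r}{\alpha_j-1}\Biggr)\binom{(r+1)k+n+1-|\alpha|+\ell(\alpha)}{k-|\alpha|}. \]
   Context: A composition $\alpha=(\alpha_1,\dots,\alpha_j)$ of an integer $m\ge 0$ is a finite sequence of positive integers summing to $m$; the empty composition $()$ is the unique composition of $0$. Write $|\alpha|$ for the sum of the parts and $\ell(\alpha)$ for the number of parts. For integers $m\ge 0$ and $r \geq 0$, let $c(m,r)$ be the set of compositions $\alpha$ of $m$ with $2\le \alpha_i\le r+1$ for all $1 \leq i \leq \ell(\alpha)$, and let $\mathcal{C}(k,r)=\bigcup_{m=0}^k c(m,r)$. The empty product equals $1$. *)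

From mathcomp Require Import all_boot all_order all_algebra.
Set Implicit Arguments. Unset Strict Implicit. Unset Printing Implicit Defensive.
Import Order.TTheory GRing.Theory Num.Theory.

(* Compositions are represented as sequences of positive naturals.
   [comps_fuel f m] lists all compositions of m (fuel f >= m suffices). *)
Fixpoint comps_fuel (f m : nat) : seq (seq nat) :=
  match f with
  | 0 => if m == 0 then [:: [::]] else [::]
  | f'.+1 =>
      if m == 0 then [:: [::]]
      else flatten [seq [seq i.+1 :: c | c <- comps_fuel f' (m - i.+1)]
                   | i <- iota 0 m]
  end.

Definition compositions (m : nat) : seq (seq nat) := comps_fuel m m.

Definition c_set (m r : nat) : seq (seq nat) :=
  [seq a <- compositions m | all (fun x => (2 <= x <= r.+1)%N) a].

Definition C_set (k r : nat) : seq (seq nat) :=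
  flatten [seq c_set m r | m <- iota 0 k.+1].

Example compositions_4 :
  compositions 4 = [:: [:: 1;1;1;1]; [:: 1;1;2]; [:: 1;2;1]; [:: 1;3];
                       [:: 2;1;1]; [:: 2;2]; [:: 3;1]; [:: 4]].
Proof. by []. Qed.

(* Both sides, as functions X k n, satisfy
     X k n = C((r+1)k+n+1, k) + sum_(0 < i <= r, i < k) (-1)^i C(r,i) X (k-i-1) (n+r(i+1)+1),
   which determines X by strong induction on k.  On the composition side this
   is the decomposition according to the first part i+1.  On the binomial side
   it follows from Pascal's rule and the alternating Vandermonde identity
   sum_i (-1)^i C(r,i) C(a+r-i, m-i) = C(a, m). *)
From mathcomp Require Import all_boot all_order all_algebra.
From mathcomp Require Import zify ring.
Import Order.TTheory GRing.Theory Num.Theory.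
Local Open Scope ring_scope.

Lemma sum_antidiagonals (V : nmodType) (h : nat -> nat -> V) k :
  \sum_(0 <= m < k) \sum_(0 <= i < m.+1) h i (m - i)%N
  = \sum_(0 <= i < k) \sum_(0 <= j < k - i) h i j.
Proof.
elim: k => [|k IH]; first by rewrite !big_geq.
rewrite [RHS]big_nat_recr //= subSnn big_nat1.
have -> : \sum_(0 <= i < k) \sum_(0 <= j < k.+1 - i) h i j
          = \sum_(0 <= i < k) (\sum_(0 <= j < k - i) h i j + h i (k - i)%N).
  by apply: eq_big_nat => i /andP[_ ltik]; rewrite subSn ?(ltnW ltik) // big_nat_recr.
rewrite big_split /= -IH [LHS]big_nat_recr //= [X in _ + X = _]big_nat_recr //=.
by rewrite subnn !addrA.
Qed.

Lemma alternating_Vandermonde r a m :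
  \sum_(0 <= i < m.+1) (-1) ^+ i * ('C(r, i))%:Z * ('C(a + r - i, m - i))%:Z
  = ('C(a, m))%:Z.
Proof.
elim: r a m => [|r IH] a m.
  rewrite big_nat_recl // big1 => [|i _]; last by rewrite bin0n mulr0 mul0r.
  by rewrite addr0 expr0 !mul1r !subn0 addn0.
case: m => [|m]; first by rewrite big_nat1 !bin0 expr0 !mul1r.
rewrite big_nat_recl //.
under eq_bigr => i _ do rewrite binS PoszD mulrDr mulrDl.
rewrite big_split /= addrA.
have IH_a1 := IH a.+1 m.+1; rewrite big_nat_recl // addSnnS in IH_a1.
have IH_a : \sum_(0 <= i < m.+1) (-1) ^+ i.+1 * ('C(r, i))%:Z
                * ('C(a + r.+1 - i.+1, m.+1 - i.+1))%:Z = - ('C(a, m))%:Z.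
  rewrite -IH -sumrN; apply: eq_bigr => i _.
  by rewrite addnS !subSS exprS mulN1r !mulNr.
by rewrite !bin0 in IH_a1 *; rewrite IH_a1 IH_a binS PoszD addrK.
Qed.

Lemma sum_signed_bin_pos r k (x : nat -> int) :
  \sum_(0 <= i < k.+1 | (0 < i <= r)%N) (-1) ^+ i * ('C(r, i))%:Z * x i
  = \sum_(0 <= i < k.+1) (-1) ^+ i * ('C(r, i))%:Z * x i - x 0%N.
Proof.
rewrite big_mkcond /= !big_nat_recl //= expr0 bin0 !mul1r add0r addrAC subrr add0r.
apply: eq_bigr => i _; case: leqP => // lt_r_i.
by rewrite bin_small // mulr0 mul0r.
Qed.

Definition binom_rec r (X : nat -> nat -> int) k n : int :=
  ('C((r.+1 * k + n).+1, k))%:Z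
  + \sum_(0 <= i < k | (0 < i <= r)%N)
      (-1) ^+ i * ('C(r, i))%:Z * X (k - i.+1)%N (n + r * i.+1 + 1)%N.

Lemma binom_rec_unique r X Y :
  (forall k n, X k n = binom_rec r X k n) ->
  (forall k n, Y k n = binom_rec r Y k n) ->
  forall k n, X k n = Y k n.
Proof.
move=> recX recY; elim/ltn_ind => k IH n; rewrite recX recY; congr (_ + _).
rewrite big_nat_cond [RHS]big_nat_cond; apply: eq_bigr => i /andP[/andP[_ ltik] _].
by rewrite IH //; lia.
Qed.

Definition binom_diag_sum r k n : int :=
  \sum_(0 <= i < k.+1) ('C((r.+1 * i + n)%N, i))%:Z.

Lemma binom_diag_sum_pascal r k n :
  binom_diag_sum r k.+1 n
  = \sum_(0 <= m < k.+2) ('C((r.+1 * m + n).+1, m))%:Z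
    - binom_diag_sum r k (n + r.+1).
Proof.
rewrite /binom_diag_sum !(big_nat_recl k.+1) // !bin0 -addrA -sumrB.
congr (_ + _); apply: eq_bigr => i _.
have -> : (r.+1 * i + (n + r.+1) = r.+1 * i.+1 + n)%N by nia.
by rewrite binS PoszD addrK.
Qed.

Lemma binom_diag_sum_rec r k n :
  binom_diag_sum r k n = binom_rec r (binom_diag_sum r) k n.
Proof.
rewrite /binom_rec; case: k => [|k].
  by rewrite /binom_diag_sum big_nat1 big_geq // !bin0 addr0.
rewrite sum_signed_bin_pos subn1 /= muln1 addn1.
have -> : \sum_(0 <= i < k.+1)
            (-1) ^+ i * ('C(r, i))%:Z * binom_diag_sum r (k.+1 - i.+1) (n + r * i.+1 + 1)
          = \sum_(0 <= m < k.+1) ('C((r.+1 * m + n).+1, m))%:Z.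
  pose h i j := (-1) ^+ i * ('C(r, i))%:Z
                * ('C((r.+1 * j + (n + r * i.+1 + 1))%N, j))%:Z.
  transitivity (\sum_(0 <= i < k.+1) \sum_(0 <= j < k.+1 - i) h i j).
    apply: eq_big_nat => i /andP[_ ltik].
    by rewrite subSS /binom_diag_sum big_distrr subSn.
  rewrite -sum_antidiagonals; apply: eq_bigr => m _.
  rewrite -(alternating_Vandermonde r); apply: eq_big_nat => i /andP[_ leim].
  by rewrite /h; congr (_ * _%:Z); congr 'C(_, _); nia.
by rewrite binom_diag_sum_pascal addnS big_nat_recr //= addrA [_ + ('C(_, _))%:Z]addrC.
Qed.

Lemma sumn_comps_fuel f m c : c \in comps_fuel f m -> sumn c = m.
Proof.
elim: f m c => [|f IH] m c /=.
  by case: eqP => [->|_]; rewrite ?inE // => /eqP ->.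
case: eqP => [->|_]; first by rewrite inE => /eqP ->.
move=> /flattenP[s /mapP[i]]; rewrite mem_iota add0n => /andP[_ ltim] ->.
by move=> /mapP[c' /IH sumc' ->] /=; lia.
Qed.

Lemma comps_fuel_unfold f m :
  comps_fuel f.+1 m
  = if m == 0%N then [:: [::]]
    else flatten [seq [seq i.+1 :: c | c <- comps_fuel f (m - i.+1)] | i <- iota 0 m].
Proof. by []. Qed.

Lemma comps_fuelS f m : (m <= f)%N -> comps_fuel f.+1 m = comps_fuel f m.
Proof.
elim: f m => [|f IH] m lemf; first by move: lemf; rewrite leqn0 => /eqP ->.
rewrite comps_fuel_unfold [RHS]comps_fuel_unfold; case: eqP => // _.
congr flatten; apply/eq_in_map => i; rewrite mem_iota add0n => /andP[_ ltim].
by rewrite IH //; lia.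
Qed.

Lemma comps_fuel_compositions f m : (m <= f)%N -> comps_fuel f m = compositions m.
Proof.
elim: f => [|f IH] lemf; first by move: lemf; rewrite leqn0 => /eqP ->.
move: lemf; rewrite leq_eqVlt => /predU1P[->|ltmf] //.
by rewrite comps_fuelS ?IH.
Qed.

Lemma compositionsS m :
  compositions m.+1
  = flatten [seq [seq i.+1 :: c | c <- compositions (m - i)] | i <- iota 0 m.+1].
Proof.
rewrite /compositions comps_fuel_unfold -[m.+1 == 0%N]/false.
congr flatten; apply/eq_in_map => i; rewrite mem_iota add0n => /andP[_ ltim].
by rewrite subSS comps_fuel_compositions //; lia.
Qed.

Lemma mem_C_set k r c : c \in C_set k r -> (sumn c <= k)%N /\ (size c <= sumn c)%N.
Proof.
move=> /flattenP[s /mapP[m]]; rewrite mem_iota add0n => /andP[_ ltmk] ->.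
rewrite mem_filter => /andP[parts_c /sumn_comps_fuel sumc]; split; first lia.
by elim: c parts_c {sumc} => //= x c IH /andP[/andP[lt1x _] /IH]; lia.
Qed.

Lemma big_c_setS (V : nmodType) (F : seq nat -> V) m r :
  \sum_(a <- c_set m.+1 r) F a
  = \sum_(0 <= i < m.+1 | (0 < i <= r)%N) \sum_(c <- c_set (m - i) r) F (i.+1 :: c).
Proof.
rewrite /c_set big_filter compositionsS big_flatten big_map [RHS]big_mkcond.
apply: eq_bigr => i _; rewrite big_map /=.
by case: ifP => _; [rewrite big_filter; apply: eq_bigr | rewrite big_pred0].
Qed.

Lemma big_C_set (V : nmodType) (F : seq nat -> V) k r :
  \sum_(a <- C_set k r) F a
  = F [::] + \sum_(0 <= i < k | (0 < i <= r)%N) \sum_(c <- C_set (k - i.+1) r) F (i.+1 :: c).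
Proof.
rewrite /C_set big_flatten big_map -/(index_iota 0 k.+1) big_nat_recl //.
rewrite big_seq1; congr (_ + _).
under eq_bigr => m _ do rewrite big_c_setS big_mkcond.
pose h i j := if (0 < i <= r)%N then \sum_(c <- c_set j r) F (i.+1 :: c) else 0.
rewrite (@sum_antidiagonals _ h) [RHS]big_mkcond; apply: eq_big_nat => i /andP[_ ltik].
rewrite /h; case: ifP => _; last by rewrite big1.
rewrite big_flatten big_map -/(index_iota 0 (k - i.+1).+1).
by rewrite -subSn.
Qed.

Definition composition_sum r k n : int :=
  \sum_(a <- C_set k r)
     (-1) ^+ (sumn a - size a)%N
     * (\prod_(x <- a) ('C(r, x.-1))%:Z)
     * ('C(((r.+1 * k + n).+1 - sumn a + size a)%N, (k - sumn a)%N))%:Z.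

Lemma composition_sum_rec r k n :
  composition_sum r k n = binom_rec r (composition_sum r) k n.
Proof.
rewrite /composition_sum big_C_set big_nil /= !subn0 addn0 expr0 !mul1r.
congr (_ + _); rewrite big_nat_cond [RHS]big_nat_cond.
apply: eq_bigr => i /andP[/andP[_ ltik] _].
rewrite big_distrr; apply: eq_big_seq => c /mem_C_set[sumc sizec] /=.
rewrite big_cons /=.
have -> : (i.+1 + sumn c - (size c).+1 = i + (sumn c - size c))%N by lia.
have -> : ((r.+1 * k + n).+1 - (i.+1 + sumn c) + (size c).+1
           = (r.+1 * (k - i.+1) + (n + r * i.+1 + 1)).+1 - sumn c + size c)%N by nia.
rewrite subnDA exprD; ring.
Qed.

Theorem corollary3p2 (k n r : nat) :
  (\sum_(0 <= i < k.+1) ('C((r.+1 * i + n)%N, i))%:Z)%R =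
  \sum_(a <- C_set k r)
     (-1) ^+ (sumn a - size a)%N
     * (\prod_(x <- a) ('C(r, x.-1))%:Z)
     * ('C(((r.+1 * k + n).+1 - sumn a + size a)%N, (k - sumn a)%N))%:Z.
Proof.
rewrite -/(binom_diag_sum r k n) -/(composition_sum r k n).
exact: binom_rec_unique (@binom_diag_sum_rec r) (@composition_sum_rec r) k n.
Qed.
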